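(* Let $Q$ be a quiver, $\Bbbk$ an algebraically closed field, and $I\subset \Bbbk Q$ a non-zero two-sided ideal of the path algebra. Let $a\in I$ be written as $a=\sum_{\omega}c_\omega\,\omega$ (finite sum over paths $\omega$ of $Q$, $c_\omega\in\Bbbk$). Then every path $\omega$ with $c_\omega\neq 0$ which is the only path of $Q$ having its head and its tail (i.e. $\omega\in\mathcal{A}$) belongs to $I$.
   Context: Paths of $Q$ include the trivial paths $\varepsilon_x$ at each vertex $x$. Each path $\omega$ has a head $\mathbf{h}(\omega)$ and tail $\mathbf{t}(\omega)$; the product $\omega_1\omega_2$ of paths in $\Bbbk Q$ is their concatenation (first $\omega_2$, then $\omega_1$) if $\mathbf{h}(\omega_2)=\mathbf{t}(\omega_1)$ and $0$ otherwise; the paths form a basis of $\Bbbk Q$. $\mathcal{A}$ denotes the set of paths $\omega$ such that no other path $\upsilon\ne\omega$ satisfies $\mathbf{h}(\upsilon)=\mathbf{h}(\omega)$ and $\mathbf{t}(\upsilon)=\mathbf{t}(\omega)$. *)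

From HB Require Import structures.
From mathcomp Require Import all_boot all_order all_algebra.
From mathcomp Require Import finmap.
From mathcomp.multinomials Require Import monalg.

Set Implicit Arguments.
Unset Strict Implicit.
Unset Printing Implicit Defensive.

Import GRing.Theory.
Local Open Scope ring_scope.

Section Quiver.
(* A quiver: vertices V, arrows A, each arrow alpha has a tail [qt alpha]
   (its start) and a head [qh alpha] (its end). *)
Variables (V A : choiceType) (qt qh : A -> V).

Fixpoint valid (x : V) (s : seq A) : bool :=
  if s is a :: s' then (qt a == x) && valid (qh a) s' else true.

Definition qpath := {p : V * seq A | valid p.1 p.2}.

Definition ptail (w : qpath) : V := (val w).1.
Definition phead (w : qpath) : V := last (val w).1 [seq qh a | a <- (val w).2].

Definition ptriv (x : V) : qpath := @exist _ (fun p => valid p.1 p.2) (x, [::]) isT.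

(* [pcat w1 w2] : the concatenation w1 w2 (first w2, then w1), defined
   when h(w2) = t(w1). *)
Definition pcat (w1 w2 : qpath) : option qpath :=
  if phead w2 == ptail w1 then
    (insub (ptail w2, (val w2).2 ++ (val w1).2) : option qpath)
  else None.

Variable k : fieldType.

Definition pathalg := {malg k[qpath]}.

Definition pbasis (w : qpath) : pathalg := << w >>.

Definition pbmul (w1 w2 : qpath) : pathalg :=
  if pcat w1 w2 is Some w then << w >> else 0.

Definition pmul (a b : pathalg) : pathalg :=
  \sum_(u <- msupp a) \sum_(v <- msupp b) (a@_u * b@_v) *: pbmul u v.

Definition is_ideal (I : pathalg -> Prop) : Prop :=
  [/\ I 0,
      (forall x y, I x -> I y -> I (x + y)),
      (forall (c : k) x, I x -> I (c *: x)),
      (forall a x, I x -> I (pmul a x)) &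
      (forall a x, I x -> I (pmul x a))].

Definition inA (w : qpath) : Prop :=
  forall v : qpath, phead v = phead w -> ptail v = ptail w -> v = w.

End Quiver.

From HB Require Import structures.
From mathcomp Require Import all_boot all_order all_algebra.
From mathcomp Require Import finmap.
From mathcomp.multinomials Require Import monalg.

(* Multiplying a by the trivial paths at h(w) on the left and at t(w) on the
   right keeps exactly the terms of a whose paths go from t(w) to h(w).  When
   w is the only such path, this two-sided product is a_w w, which therefore
   lies in I; dividing by a_w gives w in I. *)

Set Implicit Arguments.
Unset Strict Implicit.
Unset Printing Implicit Defensive.

Import GRing.Theory.
Local Open Scope ring_scope.

Section Restriction.
Variables (K : choiceType) (G : zmodType).

Definition mrestrict (P : pred K) (g : {malg G[K]}) : {malg G[K]} :=
  [malg v in msupp g => if P v then g@_v else 0].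

Lemma mcoeff_restrict P g z : (mrestrict P g)@_z = if P z then g@_z else 0.
Proof. by rewrite mcoeffE; case: msuppP => //; case: (P z). Qed.

Lemma mrestrictE P g :
  mrestrict P g = \sum_(v <- msupp g) << (if P v then g@_v else 0) *g v >>.
Proof.
have supp_le : (msupp (mrestrict P g) `<=` msupp g)%fset.
  apply/fsubsetP=> z; rewrite -!mcoeff_neq0 mcoeff_restrict.
  by case: (P z); rewrite ?eqxx.
rewrite {1}(monalgEw supp_le); apply: eq_bigr => v _.
by rewrite mcoeff_restrict.
Qed.

End Restriction.

Lemma malgZU (K : choiceType) (R : nzRingType) (c x : R) (v : K) :
  c *: << x *g v >> = << c * x *g v >> :> {malg R[K]}.
Proof. by apply/malgP=> z; rewrite mcoeffZ !mcoeffU mulrnAr. Qed.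

Section TrivialPaths.
Variables (V A : choiceType) (qt qh : A -> V).
Local Notation path := (qpath qt qh).
Local Notation ptriv := (ptriv qt qh).

Lemma pcat_ptrivl (x : V) (v : path) :
  pcat (ptriv x) v = if phead v == x then Some v else None.
Proof.
rewrite /pcat /=; case: eqP => // _.
by rewrite cats0; case: v => [[y s] ?]; apply: valK.
Qed.

Lemma pcat_ptrivr (x : V) (v : path) :
  pcat v (ptriv x) = if ptail v == x then Some v else None.
Proof.
rewrite /pcat /phead /= eq_sym; case: eqP => // <-.
by case: v => [[y s] ?]; apply: valK.
Qed.

Variable k : fieldType.
Local Notation pmul := (@pmul V A qt qh k).
Local Notation pbasis := (pbasis k).

Lemma msupp_pbasis (w : path) : msupp (pbasis w) = [fset w]%fset.
Proof. by rewrite /pbasis msuppU oner_eq0. Qed.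

Lemma pmul_ptrivl (x : V) (b : pathalg qt qh k) :
  pmul (pbasis (ptriv x)) b = mrestrict (fun v => phead v == x) b.
Proof.
rewrite mrestrictE /pmul msupp_pbasis big_seq_fset1; apply: eq_bigr => v _.
rewrite /pbmul pcat_ptrivl /pbasis mcoeffUU mul1r.
by case: ifP; rewrite ?scaler0 ?monalgU0 // malgZU mulr1.
Qed.

Lemma pmul_ptrivr (x : V) (b : pathalg qt qh k) :
  pmul b (pbasis (ptriv x)) = mrestrict (fun v => ptail v == x) b.
Proof.
rewrite mrestrictE /pmul; apply: eq_bigr => v _.
rewrite msupp_pbasis big_seq_fset1 /pbmul pcat_ptrivr /pbasis mcoeffUU mulr1.
by case: ifP; rewrite ?scaler0 ?monalgU0 // malgZU mulr1.
Qed.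

Lemma pmul_ptriv_inA (a : pathalg qt qh k) (w : path) : inA w ->
  pmul (pmul (pbasis (ptriv (phead w))) a) (pbasis (ptriv (ptail w)))
  = a@_w *: pbasis w.
Proof.
move=> Aw; apply/malgP=> z.
rewrite pmul_ptrivr pmul_ptrivl !mcoeff_restrict mcoeffZ mcoeffU.
have [->|neq_zw] := eqVneq z w; first by rewrite !eqxx mulr1.
rewrite mulr0; have [tz|//] := eqVneq (ptail z) (ptail w).
have [hz|//] := eqVneq (phead z) (phead w).
by case/eqP: neq_zw; apply: Aw.
Qed.

Lemma ideal_pbasis_inA (I : pathalg qt qh k -> Prop) (a : pathalg qt qh k)
    (w : path) :
  is_ideal I -> I a -> a@_w != 0 -> inA w -> I (pbasis w).
Proof.
move=> [_ _ IZ IMl IMr] Ia aw_neq0 Aw.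
have := IZ (a@_w)^-1 _ (IMr (pbasis (ptriv (ptail w))) _
                          (IMl (pbasis (ptriv (phead w))) _ Ia)).
by rewrite pmul_ptriv_inA // scalerA mulVf // scale1r.
Qed.

End TrivialPaths.

Theorem lemma1 (V A : choiceType) (qt qh : A -> V) (k : closedFieldType)
  (I : pathalg qt qh k -> Prop) :
  is_ideal I -> (exists x, I x /\ x <> 0) ->
  forall a : pathalg qt qh k, I a ->
  forall w : qpath qt qh, a@_w != 0 -> inA w -> I (pbasis k w).
Proof. by move=> idealI _ a Ia w; apply: ideal_pbasis_inA. Qed.
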